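(* Let $N,d\ge1$, $\lambda,\tau>0$, and let $\psi:[0,\infty)\to(0,\infty)$ be positive, nonincreasing, differentiable with $\psi(r)\le1$ for all $r\ge0$. Let $(x_i,v_i)_{i=1}^N$ solve $$\dot x_i(t)=v_i(t),\qquad \dot v_i(t)=\frac{\lambda}{N}\sum_{j=1}^N\psi(|x_i(t-\tau)-x_j(t-\tau)|)\,(v_j(t-\tau)-v_i(t-\tau)),\qquad t>0,$$ with initial data $(x_i,v_i)=(x_i^0,v_i^0)$ on $[-\tau,0]$, $(x_i^0,v_i^0)\in C([-\tau,0];\mathbb{R}^{2d})\cap C^1((-\tau,0);\mathbb{R}^{2d})$. Then $$\frac{d}{dt}V(t)\le 2\lambda\big(V(t)+V(t-\tau)\big)\qquad\text{for all }t>0.$$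
   Context: $V(t):=\frac12\sum_{i,j=1}^N|v_i(t)-v_j(t)|^2$ for $t\ge-\tau$. *)

From HB Require Import structures.
From mathcomp Require Import all_boot all_order all_algebra.
From mathcomp Require Import all_classical all_reals all_analysis.
Set Implicit Arguments. Unset Strict Implicit. Unset Printing Implicit Defensive.
Import Order.TTheory GRing.Theory Num.Theory.
Import numFieldNormedType.Exports.
Local Open Scope ring_scope.

Definition sqnorm (R : realType) (d : nat) (a : 'I_d -> R) : R :=
  \sum_(k < d) a k ^+ 2.

Definition enorm (R : realType) (d : nat) (a : 'I_d -> R) : R :=
  Num.sqrt (sqnorm a).

(* V(t) = 1/2 sum_{i,j} |v_i(t) - v_j(t)|^2, where v i k t is the k-th
   coordinate of v_i(t). *)
Definition Vfun (R : realType) (N d : nat) (v : 'I_N -> 'I_d -> R -> R) (t : R) : R :=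
  2^-1 * \sum_(i < N) \sum_(j < N) sqnorm (fun k => v i k t - v j k t).

(** Writing [a_i] for the right-hand side of the velocity equation and
    [w = v(t - tau)], symmetry of the double sum gives
    [V'(t) = 2 sum_(i,j) <v_i - v_j, a_i>
           = 2 lambda/N sum_(i,j,l) psi_il <v_i - v_j, w_l - w_i>].
    Since [0 <= psi_il <= 1], each term is at most
    [|v_i - v_j|^2 + |w_l - w_i|^2] by the AM-GM inequality, and summing over
    the free third index produces a factor [N] that cancels [1/N], leaving
    [2 lambda (V(t) + V(t - tau))]. *)
From HB Require Import structures.
From mathcomp Require Import all_boot all_order all_algebra.
From mathcomp Require Import all_classical all_reals all_analysis.
From mathcomp Require Import ring.
Set Implicit Arguments. Unset Strict Implicit. Unset Printing Implicit Defensive.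
Import Order.TTheory GRing.Theory Num.Theory.
Import numFieldNormedType.Exports.
Local Open Scope classical_set_scope.
Local Open Scope ring_scope.

Definition dispersion (R : realType) (N d : nat) (u : 'I_N -> 'I_d -> R) : R :=
  2^-1 * \sum_(i < N) \sum_(j < N) sqnorm (fun k => u i k - u j k).

Definition alignment (R : realType) (N d : nat) (lambda : R)
    (psi : 'I_N -> 'I_N -> R) (w : 'I_N -> 'I_d -> R) (i : 'I_N) (k : 'I_d) : R :=
  lambda / N%:R * \sum_(l < N) psi i l * (w l k - w i k).

Section Derivative.
Variables (R : realType) (t : R).

Lemma is_derive_sqnorm (d : nat) (f : 'I_d -> R -> R) (df : 'I_d -> R) :
  (forall k, is_derive t 1 (f k) (df k)) ->
  is_derive t 1 (fun s => sqnorm (fun k => f k s))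
    (2 * \sum_(k < d) f k t * df k).
Proof.
move=> f_df.
have sqr_df k : is_derive t 1 (f k ^+ 2) (2 * (f k t * df k)).
  by apply: is_derive_eq; rewrite /= expr1 mulrA.
have -> : (fun s => sqnorm (fun k => f k s)) = \sum_(k < d) f k ^+ 2.
  apply/funext => s; rewrite fct_sumE /sqnorm.
  by under [RHS]eq_bigr do rewrite exprfctE.
by rewrite mulr_sumr; apply: is_derive_sum.
Qed.

Lemma is_derive_Vfun (N d : nat) (v : 'I_N -> 'I_d -> R -> R)
    (a : 'I_N -> 'I_d -> R) :
  (forall i k, is_derive t 1 (v i k) (a i k)) ->
  is_derive t 1 (Vfun v)
    (\sum_(i < N) \sum_(j < N) \sum_(k < d) (v i k t - v j k t) * (a i k - a j k)).
Proof.
move=> v_a.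
have pair_df i j : is_derive t 1 (fun s => sqnorm (fun k => v i k s - v j k s))
    (2 * \sum_(k < d) (v i k t - v j k t) * (a i k - a j k)).
  by apply: is_derive_sqnorm => k; apply: is_deriveB.
have -> : Vfun v = 2^-1 \*: \sum_(i < N) \sum_(j < N)
    (fun s => sqnorm (fun k => v i k s - v j k s)).
  apply/funext => s; rewrite /Vfun /= fct_sumE; congr (_ * _).
  by apply: eq_bigr => i _; rewrite fct_sumE.
apply: is_derive_eq; rewrite scaler_sumr; apply: eq_bigr => i _.
rewrite scaler_sumr; apply: eq_bigr => j _.
by rewrite -[2 * _]/(2 *: _) scalerA mulVf ?scale1r ?pnatr_eq0.
Qed.

End Derivative.

Lemma weighted_amgm (R : realFieldType) (p x y : R) :
  0 <= p <= 1 -> 2 * p * (x * y) <= x ^+ 2 + y ^+ 2.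
Proof.
case/andP=> p_ge0 p_le1; rewrite -subr_ge0.
have -> : x ^+ 2 + y ^+ 2 - 2 * p * (x * y) =
    (1 - p) * (x ^+ 2 + y ^+ 2) + p * (x - y) ^+ 2 by ring.
by rewrite addr_ge0 // mulr_ge0 ?subr_ge0 ?addr_ge0 ?sqr_ge0.
Qed.

Lemma sum_pair_dot_symmetrize (R : comPzRingType) (I : finType) (d : nat)
    (u a : I -> 'I_d -> R) :
  \sum_i \sum_j \sum_(k < d) (u i k - u j k) * (a i k - a j k) =
  2 * \sum_i \sum_j \sum_(k < d) (u i k - u j k) * a i k.
Proof.
have swap : \sum_i \sum_j \sum_(k < d) (u j k - u i k) * a j k =
    \sum_i \sum_j \sum_(k < d) (u i k - u j k) * a i k.
  exact: exchange_big.
rewrite mulr_natl mulr2n -{2}swap -big_split; apply: eq_bigr => i _.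
rewrite -big_split; apply: eq_bigr => j _; rewrite -big_split.
by apply: eq_bigr => k _ /=; ring.
Qed.

Lemma dot_weighted_le_sqnormD (R : realType) (d : nat) (p : R) (a b : 'I_d -> R) :
  0 <= p <= 1 -> 2 * p * \sum_(k < d) a k * b k <= sqnorm a + sqnorm b.
Proof.
move=> p01; rewrite mulr_sumr /sqnorm -big_split /=.
by apply: ler_sum => k _; exact: weighted_amgm.
Qed.

Lemma dispersion_drift_le (R : realType) (N d : nat) (lambda : R)
    (psi : 'I_N -> 'I_N -> R) (u w : 'I_N -> 'I_d -> R) :
  (0 < N)%N -> 0 <= lambda -> (forall i l, 0 <= psi i l <= 1) ->
  \sum_(i < N) \sum_(j < N) \sum_(k < d)
     (u i k - u j k) * (alignment lambda psi w i k - alignment lambda psi w j k)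
  <= 2 * lambda * (dispersion u + dispersion w).
Proof.
move=> N_gt0 lambda_ge0 psi01.
have N_neq0 : N%:R != 0 :> R by rewrite pnatr_eq0 -lt0n.
set c := lambda / N%:R.
have c_ge0 : 0 <= c by rewrite divr_ge0 ?ler0n.
rewrite sum_pair_dot_symmetrize.
have -> : \sum_(i < N) \sum_(j < N) \sum_(k < d)
    (u i k - u j k) * alignment lambda psi w i k =
  c * \sum_(i < N) \sum_(j < N) \sum_(l < N)
    psi i l * \sum_(k < d) (u i k - u j k) * (w l k - w i k).
  rewrite mulr_sumr; apply: eq_bigr => i _; rewrite mulr_sumr.
  apply: eq_bigr => j _; rewrite /alignment -/c.
  under eq_bigr do rewrite mulrCA mulr_sumr.
  rewrite -mulr_sumr exchange_big; congr (_ * _); apply: eq_bigr => l _.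
  by rewrite mulr_sumr; apply: eq_bigr => k _; rewrite mulrCA.
set Su := \sum_(i < N) \sum_(j < N) sqnorm (fun k => u i k - u j k).
set Sw := \sum_(i < N) \sum_(j < N) sqnorm (fun k => w i k - w j k).
have third_index_sum : \sum_(i < N) \sum_(j < N) \sum_(l < N)
    (sqnorm (fun k => u i k - u j k) + sqnorm (fun k => w l k - w i k)) =
    N%:R * (Su + Sw).
  rewrite mulrDr [Sw]exchange_big !mulr_sumr -big_split; apply: eq_bigr => i _.
  under [LHS]eq_bigr do rewrite big_split /= sumr_const card_ord.
  by rewrite big_split /= sumr_const card_ord !mulr_natl sumrMnl.
have -> : 2 * lambda * (dispersion u + dispersion w) = c * (N%:R * (Su + Sw)).
  by rewrite /dispersion -/Su -/Sw /c; field.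
rewrite -third_index_sum mulrCA; apply: (ler_wpM2l c_ge0).
rewrite mulr_sumr; apply: ler_sum => i _; rewrite mulr_sumr; apply: ler_sum => j _.
rewrite mulr_sumr; apply: ler_sum => l _; rewrite mulrA.
exact: dot_weighted_le_sqnormD.
Qed.

Theorem lemma3p3 (R : realType) (N d : nat) (hN : (1 <= N)%N) (hd : (1 <= d)%N)
  (lambda tau : R) (hlambda : 0 < lambda) (htau : 0 < tau)
  (psi : R -> R)
  (psi_pos : forall r : R, 0 <= r -> 0 < psi r)
  (psi_noninc : forall r s : R, 0 <= r -> r <= s -> psi s <= psi r)
  (psi_diff : forall r : R, 0 < r -> derivable psi r 1)
  (psi_diff0 : cvg ((fun h => h^-1 * (psi h - psi 0)) @ 0^'+))
  (psi_le1 : forall r : R, 0 <= r -> psi r <= 1)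
  (x0 v0 x v : 'I_N -> 'I_d -> R -> R)
  (* initial data in C([-tau,0]) \cap C^1((-tau,0)) *)
  (x0_cont : forall i k, {within `[- tau, 0], continuous (x0 i k)})
  (v0_cont : forall i k, {within `[- tau, 0], continuous (v0 i k)})
  (x0_C1 : forall i k, (forall t : R, - tau < t < 0 -> derivable (x0 i k) t 1) /\
                       {in `]- tau, 0[, continuous (derive1 (x0 i k))})
  (v0_C1 : forall i k, (forall t : R, - tau < t < 0 -> derivable (v0 i k) t 1) /\
                       {in `]- tau, 0[, continuous (derive1 (v0 i k))})
  (* the solution agrees with the initial data on [-tau,0] *)
  (x_init : forall i k (t : R), - tau <= t <= 0 -> x i k t = x0 i k t)
  (v_init : forall i k (t : R), - tau <= t <= 0 -> v i k t = v0 i k t)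
  (* the solution is continuous on [-tau, oo) *)
  (x_cont : forall i k, {within `[- tau, +oo[, continuous (x i k)})
  (v_cont : forall i k, {within `[- tau, +oo[, continuous (v i k)})
  (* the delayed Cucker-Smale system for t > 0 *)
  (x_ode : forall i k (t : R), 0 < t -> is_derive t 1 (x i k) (v i k t))
  (v_ode : forall i k (t : R), 0 < t ->
     is_derive t 1 (v i k)
       (lambda / N%:R * \sum_(j < N)
          psi (enorm (fun l => x i l (t - tau) - x j l (t - tau))) *
          (v j k (t - tau) - v i k (t - tau)))) :
  forall t : R, 0 < t ->
    derivable (Vfun v) t 1 /\
    derive1 (Vfun v) t <= 2 * lambda * (Vfun v t + Vfun v (t - tau)).
Proof.
move=> t t_gt0.
have V_df := is_derive_Vfun (fun i k => v_ode i k t t_gt0).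
split; first exact: ex_derive.
rewrite derive1E derive_val.
apply: dispersion_drift_le => //; first exact: ltW.
by move=> i j; rewrite ltW ?psi_pos ?psi_le1 ?sqrtr_ge0.
Qed.
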